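(* Let $A\in\mathbb{C}^{n\times n}$ with $\|A\|_F=1$, $\lambda\in\mathbb{C}$, and $v,v'\in\mathbb{C}^n$ nonzero with $Av=\lambda v$. If $3.6\,\mu(A,\lambda,v)\,d_{\mathbb{P}}(v,v')\le\varepsilon<1$, then $\frac{\mu(A,\lambda,v)}{1+\varepsilon}\le\mu(A,\lambda,v')\le\frac{\mu(A,\lambda,v)}{1-\varepsilon}$.
   Context: $\|\cdot\|_F$ is the Frobenius norm. $d_{\mathbb{P}}(v,v')=\arccos(|\langle v,v'\rangle|/(\|v\|\|v'\|))$. For $v\ne0$, $T_v=v^\perp$, $P_{v^\perp}$ the orthogonal projection onto $T_v$, $A_{\lambda,v}=P_{v^\perp}(A-\lambda\mathrm{Id})|_{T_v}$, and $\mu(A,\lambda,v)=\|A\|_F\|A_{\lambda,v}^{-1}\|$ (operator norm; $\infty$ if not invertible). *)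

From HB Require Import structures.
From mathcomp Require Import all_boot all_order all_algebra.
From mathcomp Require Import all_classical all_reals all_analysis.
From mathcomp Require Import complex.
Set Implicit Arguments. Unset Strict Implicit. Unset Printing Implicit Defensive.
Import Order.TTheory GRing.Theory Num.Theory.
Local Open Scope ring_scope.
Local Open Scope complex_scope.

Section Defs.
Variable R : realType.
Variable n : nat.
Local Notation C := R[i].

Definition cmod (z : C) : R := let: a +i* b := z in Num.sqrt (a ^+ 2 + b ^+ 2).

Definition cinner (u w : 'cV[C]_n) : C := \sum_(i < n) u i 0 * (w i 0)^*.

Definition vnorm (u : 'cV[C]_n) : R := Num.sqrt (\sum_(i < n) cmod (u i 0) ^+ 2).

Definition frob (A : 'M[C]_n) : R :=
  Num.sqrt (\sum_(i < n) \sum_(j < n) cmod (A i j) ^+ 2).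

Definition dP (v v' : 'cV[C]_n) : R :=
  acos (cmod (cinner v v') / (vnorm v * vnorm v')).

Definition Tv (v : 'cV[C]_n) : set 'cV[C]_n := [set u | cinner u v = 0].

Definition Pperp (v u : 'cV[C]_n) : 'cV[C]_n := u - (cinner u v / cinner v v) *: v.

Definition Alv (A : 'M[C]_n) (l : C) (v w : 'cV[C]_n) : 'cV[C]_n :=
  Pperp v ((A - l%:M) *m w).

Definition Alv_invertible (A : 'M[C]_n) (l : C) (v : 'cV[C]_n) : Prop :=
  forall u, Tv v u -> exists! w, Tv v w /\ Alv A l v w = u.

(* operator norm of the inverse of A_{lambda,v}:
   sup over u in T_v of ||A_{lambda,v}^{-1} u|| / ||u||
   (w ranges over the unique preimage of u in T_v; u = 0 gives 0) *)
Definition Alv_inv_opnorm (A : 'M[C]_n) (l : C) (v : 'cV[C]_n) : \bar R :=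
  ereal_sup [set x : \bar R | exists u w, Tv v u /\ Tv v w /\ Alv A l v w = u /\
                                          x = (vnorm w / vnorm u)%:E].

Definition mu (A : 'M[C]_n) (l : C) (v : 'cV[C]_n) : \bar R :=
  if `[< Alv_invertible A l v >] then ((frob A)%:E * Alv_inv_opnorm A l v)%E
  else +oo%E.

End Defs.

From HB Require Import structures.
From mathcomp Require Import all_boot all_order all_algebra.
From mathcomp Require Import all_classical all_reals all_analysis.
From mathcomp Require Import complex ring lra.
Import Order.TTheory GRing.Theory Num.Theory numFieldNormedType.Exports.
Local Open Scope complex_scope.
Local Open Scope ring_scope.

(* Rescale v and v' to unit vectors a and b with <b, a> = c = cos d_P(v, v') >= 0.
   The composite U of the Householder reflections in b and in a + b is unitary with
   U b = a, so it maps T_b onto T_a, and ||U x - x|| <= 2 sqrt(1 - c) ||x||.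
   Comparing A_{l,a} U with U A_{l,b} on T_b and using ||A|| <= ||A||_F = 1 gives
   ||A_{l,a} (U w)|| <= ||A_{l,b} w|| + K ||w|| with K = 4 sqrt(1 - c), so that
   ||A_{l,a}^-1|| <= m and K m < 1 imply ||A_{l,b}^-1|| <= m / (1 - K m), including
   the invertibility of A_{l,b}.  Finally 1 - cos d <= d^2 / 2 gives K <= 2 sqrt 2 d,
   which is below 3.6 d. *)

Set Implicit Arguments. Unset Strict Implicit. Unset Printing Implicit Defensive.

Section Trigonometry.
Variable R : realType.

Lemma sin_le_id (x : R) : 0 <= x -> sin x <= x.
Proof.
move=> x_ge0; have cf : continuous (fun t : R => t - sin t).
  by move=> t; apply: continuousB => //; exact: continuous_sin.
have [c _] := @MVT_segment R (fun t => t - sin t) (fun t => 1 - cos t) 0 x x_ge0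
  (fun t _ => _) (continuous_subspaceT cf).
by rewrite sin0 !subr0 => mvt; rewrite -subr_ge0 mvt mulr_ge0 // subr_ge0 cos_le1.
Qed.

Lemma one_sub_cos_le (x : R) : 0 <= x <= 2 * pi -> 1 - cos x <= x ^+ 2 / 2.
Proof.
move=> /andP[x_ge0 x_le2pi].
have half_ge0 : 0 <= x / 2 by lra.
have sin_half_ge0 : 0 <= sin (x / 2) by apply: sin_ge0_pi; apply/andP; split; lra.
have half_angle : 1 - cos x = 2 * sin (x / 2) ^+ 2.
  by rewrite -[X in cos X](@divfK _ 2) // mulr_natr cos_mulr2n sin2cos2; lra.
have : sin (x / 2) ^+ 2 <= (x / 2) ^+ 2 by rewrite ler_pXn2r // ?nnegrE // sin_le_id.
lra.
Qed.

Lemma sqrt_one_sub_le_acos (c : R) : 0 <= c <= 1 ->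
  4 * Num.sqrt (1 - c) <= 36 / 10 * acos c.
Proof.
move=> /andP[c_ge0 c_le1]; have c_itv : -1 <= c <= 1 by apply/andP; split; lra.
have acos_ge0c := acos_ge0 c_itv; have acos_lepic := acos_lepi c_itv.
have : 1 - c <= acos c ^+ 2 / 2.
  have {1}<- : cos (acos c) = c by apply: acosK; rewrite in_itv /=.
  by apply: one_sub_cos_le; have := pi_ge0 R => ?; apply/andP; split; lra.
rewrite -(@ler_pXn2r _ 2) // ?nnegrE ?mulr_ge0 ?sqrtr_ge0 //.
rewrite !exprMn sqr_sqrtr; lra.
Qed.

End Trigonometry.

Section ComplexModulus.
Variable R : realType.
Local Notation C := R[i].
Implicit Types (z k : C) (r s : R).

Lemma real_complex1 : (1 : R)%:C = 1 :> C. Proof. by []. Qed.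
Lemma real_complexD r s : (r + s)%:C = r%:C + s%:C :> C. Proof. exact: rmorphD. Qed.
Lemma real_complexB r s : (r - s)%:C = r%:C - s%:C :> C. Proof. exact: rmorphB. Qed.
Lemma real_complexN r : (- r)%:C = - r%:C :> C. Proof. exact: rmorphN. Qed.
Lemma real_complexM r s : (r * s)%:C = r%:C * s%:C :> C. Proof. exact: rmorphM. Qed.
Lemma real_complexV r : (r^-1)%:C = (r%:C)^-1 :> C. Proof. exact: fmorphV. Qed.

Lemma conjC_real_complex r : (r%:C)^* = r%:C :> C. Proof. exact: conjc_real. Qed.

Lemma real_complex_eq0 r : (r%:C == 0 :> C) = (r == 0).
Proof. by apply/eqP/eqP => [/complexI|->]. Qed.

Definition cnorm2 z : R := complex.Re z ^+ 2 + complex.Im z ^+ 2.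

Lemma cnorm2_ge0 z : 0 <= cnorm2 z.
Proof. by rewrite addr_ge0 // sqr_ge0. Qed.

Lemma cmodE z : cmod z = Num.sqrt (cnorm2 z).
Proof. by case: z. Qed.

Lemma cmod_ge0 z : 0 <= cmod z.
Proof. by rewrite cmodE sqrtr_ge0. Qed.

Lemma cmod_sqr z : cmod z ^+ 2 = cnorm2 z.
Proof. by rewrite cmodE sqr_sqrtr // cnorm2_ge0. Qed.

Lemma cnorm2E z : (cnorm2 z)%:C = z * z^*.
Proof.
case: z => a b; rewrite /cnorm2 /=; apply/eqP; rewrite eq_complex /=.
by apply/andP; split; apply/eqP; ring.
Qed.

Lemma cnorm2_eq0 z : cnorm2 z = 0 -> z = 0.
Proof.
case: z => a b; rewrite /cnorm2 /= => h.
have -> : a = 0 by apply/eqP; rewrite -sqrf_eq0; apply/eqP; nra.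
have -> : b = 0 by apply/eqP; rewrite -sqrf_eq0; apply/eqP; nra.
by [].
Qed.

Lemma cmod_eq0 z : cmod z = 0 -> z = 0.
Proof. by move=> h; apply: cnorm2_eq0; rewrite -cmod_sqr h expr0n. Qed.

Lemma cnorm2M z k : cnorm2 (z * k) = cnorm2 z * cnorm2 k.
Proof. by case: z => a b; case: k => c d; rewrite /cnorm2 /=; ring. Qed.

Lemma cnorm2J z : cnorm2 z^* = cnorm2 z.
Proof. by case: z => a b; rewrite /cnorm2 /=; ring. Qed.

Lemma cnorm2R r : cnorm2 r%:C = r ^+ 2.
Proof. by rewrite /cnorm2 /=; ring. Qed.

Lemma Re_le_cmod z : complex.Re z <= cmod z.
Proof.
rewrite cmodE; apply: (le_trans (ler_norm _)); rewrite -sqrtr_sqr.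
by apply: ler_wsqrtr; rewrite lerDl sqr_ge0.
Qed.

End ComplexModulus.

Section InnerProduct.
Variables (R : realType) (n : nat).
Local Notation C := R[i].
Local Notation V := 'cV[C]_n.
Implicit Types (u v w x y : V) (k z : C).

Lemma cinnerDl u w x : cinner (u + w) x = cinner u x + cinner w x.
Proof. by rewrite /cinner -big_split; apply: eq_bigr => i _; rewrite !mxE mulrDl. Qed.

Lemma cinnerZl k u x : cinner (k *: u) x = k * cinner u x.
Proof. by rewrite /cinner mulr_sumr; apply: eq_bigr => i _; rewrite !mxE mulrA. Qed.

Lemma cinnerC u x : cinner x u = (cinner u x)^*.
Proof.
rewrite /cinner rmorph_sum; apply: eq_bigr => i _.
by rewrite rmorphM /= conjCK mulrC.
Qed.

Lemma cinnerDr u w x : cinner x (u + w) = cinner x u + cinner x w.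
Proof. by rewrite cinnerC cinnerDl rmorphD /= -!cinnerC. Qed.

Lemma cinnerZr k u x : cinner x (k *: u) = k^* * cinner x u.
Proof. by rewrite cinnerC cinnerZl rmorphM /= -cinnerC. Qed.

Lemma cinnerNl u x : cinner (- u) x = - cinner u x.
Proof. by rewrite -scaleN1r cinnerZl mulN1r. Qed.

Lemma cinnerNr u x : cinner x (- u) = - cinner x u.
Proof. by rewrite cinnerC cinnerNl rmorphN /= -cinnerC. Qed.

Lemma cinnerBl u w x : cinner (u - w) x = cinner u x - cinner w x.
Proof. by rewrite cinnerDl cinnerNl. Qed.

Lemma cinnerBr u w x : cinner x (u - w) = cinner x u - cinner x w.
Proof. by rewrite cinnerDr cinnerNr. Qed.

Lemma cinner0l x : cinner 0 x = 0.
Proof. by rewrite -(scale0r 0) cinnerZl mul0r. Qed.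

Lemma cinner0r x : cinner x 0 = 0.
Proof. by rewrite cinnerC cinner0l conjC0. Qed.

Definition vnorm2 u : R := \sum_(i < n) cmod (u i 0) ^+ 2.

Lemma vnormE u : vnorm u = Num.sqrt (vnorm2 u).
Proof. by []. Qed.

Lemma vnorm2_ge0 u : 0 <= vnorm2 u.
Proof. by rewrite sumr_ge0 // => i _; rewrite sqr_ge0. Qed.

Lemma vnorm_ge0 u : 0 <= vnorm u.
Proof. exact: sqrtr_ge0. Qed.

Lemma vnorm_sqr u : vnorm u ^+ 2 = vnorm2 u.
Proof. by rewrite sqr_sqrtr // vnorm2_ge0. Qed.

Lemma cinner_vnorm2 u : cinner u u = (vnorm2 u)%:C.
Proof.
rewrite /vnorm2 /cinner rmorph_sum; apply: eq_bigr => i _.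
by rewrite cmod_sqr; exact: (esym (cnorm2E _)).
Qed.

Lemma vnorm2_eq0 u : vnorm2 u = 0 -> u = 0.
Proof.
move=> /eqP; rewrite psumr_eq0 => [/allP u0|i _]; last by rewrite sqr_ge0.
apply/matrixP => i j; rewrite ord1 mxE; apply: cnorm2_eq0.
by rewrite -cmod_sqr; apply/eqP/u0; rewrite mem_index_enum.
Qed.

Lemma vnorm2_gt0 u : u != 0 -> 0 < vnorm2 u.
Proof.
by move=> u0; rewrite lt_def vnorm2_ge0 andbT; apply: contra u0 => /eqP/vnorm2_eq0 ->.
Qed.

Lemma vnorm_eq0 u : vnorm u = 0 -> u = 0.
Proof. by move=> u0; apply: vnorm2_eq0; rewrite -vnorm_sqr u0 expr0n. Qed.

Lemma vnorm_gt0 u : u != 0 -> 0 < vnorm u.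
Proof. by move=> u0; rewrite sqrtr_gt0 vnorm2_gt0. Qed.

Lemma cinner_self_neq0 u : u != 0 -> cinner u u != 0.
Proof. by move=> u0; rewrite cinner_vnorm2 real_complex_eq0 gt_eqF // vnorm2_gt0. Qed.

Lemma vnorm20 : vnorm2 (0 : V) = 0.
Proof. by apply/complexI; rewrite -cinner_vnorm2 cinner0l. Qed.

Lemma vnorm0 : vnorm (0 : V) = 0.
Proof. by rewrite vnormE vnorm20 sqrtr0. Qed.

Lemma vnorm2Z k u : vnorm2 (k *: u) = cnorm2 k * vnorm2 u.
Proof.
by apply: complexI; rewrite rmorphM /= -!cinner_vnorm2 cinnerZl cinnerZr cnorm2E; ring.
Qed.

Lemma vnormN u : vnorm (- u) = vnorm u.
Proof.
rewrite !vnormE -scaleN1r vnorm2Z.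
by rewrite (_ : cnorm2 (-1) = 1) ?mul1r // /cnorm2 /=; ring.
Qed.

Lemma vnorm2D x y : vnorm2 (x + y) = vnorm2 x + vnorm2 y + 2 * complex.Re (cinner x y).
Proof.
apply: complexI; rewrite !rmorphD rmorphM /= -!cinner_vnorm2.
rewrite cinnerDl !cinnerDr (cinnerC x y) (_ : 2%:C = 2%:R) ?rmorph_nat // -addcJ; ring.
Qed.

Lemma vnorm2D_orth x y : cinner x y = 0 -> vnorm2 (x + y) = vnorm2 x + vnorm2 y.
Proof. by move=> xy0; rewrite vnorm2D xy0 /= mulr0 addr0. Qed.

Lemma cauchy_schwarz2 x y : cnorm2 (cinner x y) <= vnorm2 x * vnorm2 y.
Proof.
have [y0|yn] := eqVneq y 0; first by rewrite y0 cinner0r vnorm20 mulr0 cnorm2R expr0n.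
set r := vnorm2 y; set z := cinner x y.
have expand : (vnorm2 (r%:C *: x - z *: y))%:C = (r * (r * vnorm2 x - cnorm2 z))%:C.
  rewrite -cinner_vnorm2 !cinnerBl !cinnerBr !cinnerZl !cinnerZr !cinner_vnorm2.
  rewrite conjC_real_complex (cinnerC x y) -/z !real_complexM real_complexB cnorm2E; ring.
have := vnorm2_ge0 (r%:C *: x - z *: y).
by rewrite (complexI expand) pmulr_rge0 ?vnorm2_gt0 // subr_ge0 mulrC.
Qed.

Lemma cauchy_schwarz x y : cmod (cinner x y) <= vnorm x * vnorm y.
Proof.
by rewrite cmodE !vnormE -sqrtrM ?vnorm2_ge0 // ler_wsqrtr ?cauchy_schwarz2.
Qed.

Lemma vnormD x y : vnorm (x + y) <= vnorm x + vnorm y.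
Proof.
rewrite -(@ler_pXn2r _ 2) // ?nnegrE ?addr_ge0 ?vnorm_ge0 //.
rewrite sqrrD !vnorm_sqr vnorm2D.
have := le_trans (Re_le_cmod (cinner x y)) (cauchy_schwarz x y); lra.
Qed.

Lemma vnormB x y : vnorm (x - y) <= vnorm x + vnorm y.
Proof. by rewrite -(vnormN y) vnormD. Qed.

Lemma frob_ge0 (A : 'M[C]_n) : 0 <= frob A.
Proof. exact: sqrtr_ge0. Qed.

Lemma vnorm2_mulmx (A : 'M[C]_n) x : vnorm2 (A *m x) <= frob A ^+ 2 * vnorm2 x.
Proof.
rewrite sqr_sqrtr; last first.
  by rewrite sumr_ge0 // => i _; rewrite sumr_ge0 // => j _; rewrite sqr_ge0.
rewrite mulr_suml; apply: ler_sum => i _.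
pose r : V := \col_j (A i j)^*.
have -> : (A *m x) i 0 = cinner x r.
  by rewrite mxE; apply: eq_bigr => j _; rewrite mxE conjCK mulrC.
have -> : \sum_(j < n) cmod (A i j) ^+ 2 = vnorm2 r.
  by apply: eq_bigr => j _; rewrite mxE !cmod_sqr cnorm2J.
by rewrite cmod_sqr mulrC cauchy_schwarz2.
Qed.

Lemma vnorm_mulmx (A : 'M[C]_n) x : vnorm (A *m x) <= frob A * vnorm x.
Proof.
rewrite -[frob A]ger0_norm ?frob_ge0 // -sqrtr_sqr !vnormE.
by rewrite -sqrtrM ?sqr_ge0 // ler_wsqrtr // vnorm2_mulmx.
Qed.

End InnerProduct.

Section Projection.
Variables (R : realType) (n : nat).
Local Notation C := R[i].
Local Notation V := 'cV[C]_n.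
Implicit Types (u v w x y : V) (k : C) (A : 'M[C]_n) (l : C).

Lemma Pperp_orth v u : v != 0 -> cinner (Pperp v u) v = 0.
Proof. by move=> v0; rewrite cinnerBl cinnerZl divfK ?subrr ?cinner_self_neq0. Qed.

Lemma Pperp_Tv v w : Tv v w -> Pperp v w = w.
Proof. by rewrite /Tv /Pperp /= => ->; rewrite mul0r scale0r subr0. Qed.

Lemma PperpD v x y : Pperp v (x + y) = Pperp v x + Pperp v y.
Proof. by rewrite /Pperp cinnerDl mulrDl scalerDl opprD addrACA. Qed.

Lemma PperpN v x : Pperp v (- x) = - Pperp v x.
Proof. by rewrite /Pperp cinnerNl mulNr scaleNr opprB opprK addrC. Qed.

Lemma PperpB v x y : Pperp v (x - y) = Pperp v x - Pperp v y.
Proof. by rewrite PperpD PperpN. Qed.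

Lemma vnorm_Pperp v u : v != 0 -> vnorm (Pperp v u) <= vnorm u.
Proof.
move=> v0; have split_u : u = Pperp v u + (cinner u v / cinner v v) *: v.
  by rewrite subrK.
rewrite !vnormE ler_wsqrtr // [X in _ <= vnorm2 X]split_u.
by rewrite vnorm2D_orth ?lerDl ?vnorm2_ge0 // cinnerZr Pperp_orth // mulr0.
Qed.

Lemma Tv0 v : Tv v 0.
Proof. exact: cinner0l. Qed.

Lemma TvB v x y : Tv v x -> Tv v y -> Tv v (x - y).
Proof. by rewrite /Tv /= cinnerBl => -> ->; rewrite subrr. Qed.

Lemma Tv_scale k v w : k != 0 -> Tv (k *: v) w <-> Tv v w.
Proof.
move=> k0; rewrite /Tv /= cinnerZr; split => [/eqP|->]; last by rewrite mulr0.
by rewrite mulf_eq0 conjC_eq0 (negbTE k0) => /eqP.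
Qed.

Lemma Pperp_scale k v u : k != 0 -> Pperp (k *: v) u = Pperp v u.
Proof.
move=> k0; rewrite /Pperp cinnerZr !cinnerZl cinnerZr scalerA; congr (_ - _ *: _).
have [->|vv0] := eqVneq (cinner v v) 0; first by rewrite !mulr0 !invr0 !mulr0 mul0r.
have kJ0 : k^* != 0 by rewrite conjC_eq0.
by field; rewrite vv0 k0 andbT; exact: kJ0.
Qed.

Lemma Alv0 A l v : Alv A l v 0 = 0.
Proof. by rewrite /Alv mulmx0 (Pperp_Tv (Tv0 v)). Qed.

Lemma AlvB A l v x y : Alv A l v (x - y) = Alv A l v x - Alv A l v y.
Proof. by rewrite /Alv mulmxBr PperpB. Qed.

Lemma Alv_scale A l k v w : k != 0 -> Alv A l (k *: v) w = Alv A l v w.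
Proof. by move=> k0; rewrite /Alv Pperp_scale. Qed.

Lemma Tv_Alv A l v w : v != 0 -> Tv v (Alv A l v w).
Proof. exact: Pperp_orth. Qed.

Definition Alv_inv_bound A l v (m : R) :=
  forall w, Tv v w -> vnorm w <= m * vnorm (Alv A l v w).

Lemma Alv_inv_bound_scale A l k v m : k != 0 ->
  Alv_inv_bound A l (k *: v) m <-> Alv_inv_bound A l v m.
Proof.
move=> k0; split => bound w w_v.
  by rewrite -(Alv_scale A l v w k0); apply/bound/(Tv_scale v w k0).
by rewrite (Alv_scale A l v w k0); apply/bound/(Tv_scale v w k0).
Qed.

End Projection.

Section Householder.
Variables (R : realType) (n : nat).
Local Notation C := R[i].
Local Notation V := 'cV[C]_n.
Implicit Types (u v w x y : V) (k : C).

Definition householder u x : V := x - (2%:R * cinner x u / cinner u u) *: u.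

Lemma householder_cinner u x y : u != 0 ->
  cinner (householder u x) (householder u y) = cinner x y.
Proof.
move=> u0; have uu0 := cinner_self_neq0 u0.
have uuJ : (cinner u u)^* = cinner u u by rewrite cinner_vnorm2 conjC_real_complex.
rewrite !cinnerBl !cinnerBr !cinnerZl !cinnerZr !rmorphM /= fmorphV /= conjC_nat uuJ.
by rewrite -!cinnerC (cinnerC u x); field.
Qed.

Lemma householderD u x y : householder u (x + y) = householder u x + householder u y.
Proof. by rewrite /householder cinnerDl mulrDr mulrDl scalerDl opprD addrACA. Qed.

Lemma householderZ u k x : householder u (k *: x) = k *: householder u x.
Proof. by rewrite /householder cinnerZl scalerBr scalerA; congr (_ - _ *: _); ring. Qed.

Lemma householderB u x y : householder u (x - y) = householder u x - householder u y.
Proof. by rewrite householderD -scaleN1r householderZ scaleN1r. Qed.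

End Householder.

Section Transport.
Variables (R : realType) (n : nat).
Local Notation C := R[i].
Local Notation V := 'cV[C]_n.
Implicit Types (u v w x y : V) (k : C).

Variables (a b : V) (c : R).
Hypotheses (a_unit : vnorm2 a = 1) (b_unit : vnorm2 b = 1).
Hypotheses (cinner_ba : cinner b a = c%:C) (c_ge0 : 0 <= c).

Let cinner_aa : cinner a a = 1. Proof. by rewrite cinner_vnorm2 a_unit. Qed.
Let cinner_bb : cinner b b = 1. Proof. by rewrite cinner_vnorm2 b_unit. Qed.
Let cinner_ab : cinner a b = c%:C. Proof. by rewrite cinnerC cinner_ba conjC_real_complex. Qed.

Let one_plus_c_neq0 : 1 + c%:C != 0 :> C.
Proof. by rewrite -real_complexD real_complex_eq0 gt_eqF // ltr_pwDl. Qed.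

Let a_neq0 : a != 0.
Proof. by apply: contra_eq_neq a_unit => ->; rewrite vnorm20 eq_sym oner_neq0. Qed.

Let b_neq0 : b != 0.
Proof. by apply: contra_eq_neq b_unit => ->; rewrite vnorm20 eq_sym oner_neq0. Qed.

Let ab_neq0 : a + b != 0.
Proof.
apply/eqP => ab0; move: one_plus_c_neq0.
by rewrite -cinner_bb -cinner_ab -cinnerDl addrC ab0 cinner0l eqxx.
Qed.

(* [householder b] sends [b] to [-b] and [householder (a + b)] then sends [-b] to [a]. *)
Definition transport x : V := householder (a + b) (householder b x).

Lemma transport_cinner x y : cinner (transport x) (transport y) = cinner x y.
Proof. by rewrite !householder_cinner ?ab_neq0 ?b_neq0. Qed.

Lemma vnorm_transport x : vnorm (transport x) = vnorm x.
Proof.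
rewrite !vnormE; congr Num.sqrt.
by apply: complexI; rewrite -!cinner_vnorm2 transport_cinner.
Qed.

Lemma transportB x y : transport (x - y) = transport x - transport y.
Proof. by rewrite /transport !householderB. Qed.

Lemma transportZ k x : transport (k *: x) = k *: transport x.
Proof. by rewrite /transport !householderZ. Qed.

Let g : V := (c / (1 + c))%:C *: b - (1 + c)^-1%:C *: a.

Lemma transport_subr x : transport x - x = cinner x b *: (a - b) + cinner x g *: (a + b).
Proof.
have cinner_ee : cinner (a + b) (a + b) = 2%:R * (1 + c%:C).
  by rewrite cinnerDl !cinnerDr cinner_aa cinner_bb cinner_ab cinner_ba; ring.
rewrite /transport /householder cinner_ee !cinnerBl !cinnerZl !cinnerDr.
rewrite cinnerNr !cinnerZr cinner_ba cinner_bb !conjC_real_complex.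
rewrite !(real_complexM, real_complexV, real_complexD).
apply/matrixP => i j; rewrite !mxE.
by field.
Qed.

Lemma transport_b : transport b = a.
Proof.
have := transport_subr b; rewrite cinner_bb scale1r /g cinnerBr !cinnerZr.
rewrite cinner_bb cinner_ba !conjC_real_complex !(real_complexM, real_complexV, real_complexD).
rewrite (_ : _ * 1 - _ = 0) ?scale0r ?addr0 => [/(canRL (subrK b))->|]; first by rewrite subrK.
by field.
Qed.

Let vnorm2_comb (s t : R) : vnorm2 (s%:C *: b + t%:C *: a) = s ^+ 2 + t ^+ 2 + 2 * s * t * c.
Proof.
rewrite vnorm2D !vnorm2Z !cnorm2R a_unit b_unit cinnerZl cinnerZr cinner_ba.
by rewrite conjC_real_complex -!real_complexM /=; ring.
Qed.

Let cinner_amb_apb : cinner (a - b) (a + b) = 0.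
Proof. by rewrite cinnerBl !cinnerDr cinner_aa cinner_bb cinner_ab cinner_ba; ring. Qed.

Let vnorm2_amb : vnorm2 (a - b) = 2 - 2 * c.
Proof.
have -> : a - b = (-1)%:C *: b + 1%:C *: a.
  by rewrite real_complexN real_complex1 scaleN1r scale1r addrC.
by rewrite vnorm2_comb; ring.
Qed.

Let vnorm2_g : vnorm2 g * vnorm2 (a + b) = 2 * (1 - c).
Proof.
have -> : a + b = 1%:C *: b + 1%:C *: a by rewrite real_complex1 !scale1r addrC.
rewrite /g -scaleNr -real_complexN !vnorm2_comb.
by field; rewrite gt_eqF // ltr_pwDl.
Qed.

Lemma vnorm2_transport_subr x : vnorm2 (transport x - x) <= 4 * (1 - c) * vnorm2 x.
Proof.
rewrite transport_subr vnorm2D_orth; last by rewrite cinnerZl cinnerZr cinner_amb_apb !mulr0.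
rewrite !vnorm2Z vnorm2_amb.
have cs_b : cnorm2 (cinner x b) * (2 - 2 * c) <= vnorm2 x * (2 - 2 * c).
  by rewrite ler_wpM2r -?vnorm2_amb ?vnorm2_ge0 // -[leRHS]mulr1 -b_unit cauchy_schwarz2.
have cs_g : cnorm2 (cinner x g) * vnorm2 (a + b) <= vnorm2 x * vnorm2 g * vnorm2 (a + b).
  by rewrite ler_wpM2r ?vnorm2_ge0 // cauchy_schwarz2.
rewrite -mulrA vnorm2_g in cs_g; lra.
Qed.

Lemma vnorm_transport_subr x : vnorm (transport x - x) <= 2 * Num.sqrt (1 - c) * vnorm x.
Proof.
have c_le1 : c <= 1 by have := vnorm2_ge0 (a - b); rewrite vnorm2_amb; lra.
rewrite -(@ler_pXn2r _ 2) // ?nnegrE ?vnorm_ge0 ?mulr_ge0 ?vnorm_ge0 ?sqrtr_ge0 //.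
rewrite !exprMn !vnorm_sqr sqr_sqrtr ?subr_ge0 //.
have := vnorm2_transport_subr x; lra.
Qed.

Lemma transport_Pperp y : transport (Pperp b y) = Pperp a (transport y).
Proof.
rewrite /Pperp cinner_aa cinner_bb !divr1 transportB transportZ transport_b.
by rewrite -{2}transport_b transport_cinner.
Qed.

Lemma Tv_transport w : Tv b w -> Tv a (transport w).
Proof. by rewrite /Tv /= -transport_b transport_cinner. Qed.

Variables (A : 'M[C]_n) (l : C).
Hypothesis frobA_le1 : frob A <= 1.

Let vnorm_mulmx_le x : vnorm (A *m x) <= vnorm x.
Proof.
by apply: le_trans (vnorm_mulmx _ _) _; rewrite ler_piMl ?vnorm_ge0.
Qed.

Lemma Alv_transport w : Alv A l a (transport w) =
  transport (Alv A l b w) + Pperp a (A *m transport w - transport (A *m w)).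
Proof.
rewrite /Alv transport_Pperp -PperpD; congr Pperp.
by rewrite !mulmxBl !mul_scalar_mx transportB transportZ [RHS]addrC addrA subrK.
Qed.

Lemma vnorm_Alv_transport w : vnorm (Alv A l a (transport w)) <=
  vnorm (Alv A l b w) + 4 * Num.sqrt (1 - c) * vnorm w.
Proof.
rewrite Alv_transport; apply: le_trans (vnormD _ _) _.
rewrite vnorm_transport lerD2l; apply: le_trans (vnorm_Pperp _ a_neq0) _.
have -> : A *m transport w - transport (A *m w) =
    A *m (transport w - w) - (transport (A *m w) - A *m w).
  by move: (transport w) (transport (A *m w)) => Uw UAw; rewrite mulmxBr opprB addrA subrK.
apply: le_trans (vnormB _ _) _.
have := vnorm_mulmx_le (transport w - w); have := vnorm_mulmx_le w.
have := vnorm_transport_subr w; have := vnorm_transport_subr (A *m w).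
have := sqrtr_ge0 (1 - c); nra.
Qed.

Lemma Alv_inv_bound_transport (m : R) : 0 <= m -> 4 * Num.sqrt (1 - c) * m < 1 ->
  Alv_inv_bound A l a m -> Alv_inv_bound A l b (m / (1 - 4 * Num.sqrt (1 - c) * m)).
Proof.
set K := 4 * Num.sqrt (1 - c) => m_ge0 Km_lt1 bound_a w w_b.
have := bound_a _ (Tv_transport w_b); rewrite vnorm_transport => w_le.
have := ler_wpM2l m_ge0 (vnorm_Alv_transport w); rewrite -/K => Uw_le.
by rewrite mulrAC ler_pdivlMr ?subr_gt0 //; lra.
Qed.

End Transport.

Section Invertibility.
Variables (R : realType) (n : nat).
Local Notation C := R[i].
Local Notation V := 'cV[C]_n.
Implicit Types (u v w x : V) (A : 'M[C]_n) (l : C).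

Lemma unitmx_of_mulmx_eq0 (G : 'M[C]_n) : (forall w : V, G *m w = 0 -> w = 0) -> G \in unitmx.
Proof.
move=> G_inj; rewrite -unitmx_tr -row_free_unit -kermx_eq0; apply/eqP/row_matrixP => i.
rewrite row0; set r := row i _.
have : G *m r^T = 0.
  by rewrite -[G]trmxK -trmx_mul /r -row_mul mulmx_ker row0 trmx0.
by move/G_inj/(congr1 trmx); rewrite trmxK trmx0.
Qed.

Definition proj_line v : 'M[C]_n := (cinner v v)^-1 *: (v *m \row_j (v j 0)^*).

Lemma proj_line_mul v x : proj_line v *m x = (cinner x v / cinner v v) *: v.
Proof.
rewrite /proj_line -scalemxAl -mulmxA.
have -> : \row_j (v j 0)^* *m x = (cinner x v)%:M.
  apply/matrixP => i j; rewrite !ord1 !mxE eqxx mulr1n.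
  by apply: eq_bigr => k _; rewrite mxE mulrC.
by rewrite mul_mx_scalar scalerA mulrC.
Qed.

Lemma Pperp_mulmx v x : Pperp v x = (1%:M - proj_line v) *m x.
Proof. by rewrite mulmxBl mul1mx proj_line_mul. Qed.

(* [G] extends [A_{l,v}] from [T_v] to the whole space by the identity along [v],
   so inverting the matrix [G] inverts [A_{l,v}]. *)
Lemma Alv_invertible_of_bound A l v (m : R) : v != 0 -> Alv_inv_bound A l v m ->
  Alv_invertible A l v.
Proof.
move=> v0 bound; pose P := 1%:M - proj_line v.
pose G := P *m (A - l%:M) *m P + proj_line v.
have Gw w : G *m w = Alv A l v (Pperp v w) + proj_line v *m w.
  by rewrite /G mulmxDl -!mulmxA /Alv !Pperp_mulmx.
have cinner_G w : cinner (G *m w) v = cinner w v.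
  by rewrite Gw cinnerDl Tv_Alv // proj_line_mul cinnerZl add0r divfK ?cinner_self_neq0.
have Gw_Tv w : Tv v w -> G *m w = Alv A l v w.
  by move=> w_v; rewrite Gw proj_line_mul Pperp_Tv // w_v mul0r scale0r addr0.
have Alv_eq0 w : Tv v w -> Alv A l v w = 0 -> w = 0.
  move=> w_v Aw0; have := bound w w_v; rewrite Aw0 vnorm0 mulr0 => w_le0.
  by apply: vnorm_eq0; apply/le_anti; rewrite w_le0 vnorm_ge0.
have G_unit : G \in unitmx.
  apply: unitmx_of_mulmx_eq0 => w Gw0.
  have w_v : Tv v w by rewrite /Tv /= -cinner_G Gw0 cinner0l.
  by apply: Alv_eq0; rewrite // -Gw_Tv.
move=> u u_v; pose w := invmx G *m u.
have GwE : G *m w = u by rewrite mulKVmx.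
have w_v : Tv v w by rewrite /Tv /= -cinner_G GwE.
exists w; split; first by split; rewrite // -Gw_Tv.
move=> w' [w'_v Aw'u]; apply/eqP; rewrite -subr_eq0; apply/eqP.
by apply: Alv_eq0; [exact: TvB | rewrite AlvB Aw'u -Gw_Tv // GwE subrr].
Qed.

End Invertibility.

Section ConditionNumber.
Variables (R : realType) (n : nat).
Local Notation C := R[i].
Local Notation V := 'cV[C]_n.
Implicit Types (u v w x : V) (A : 'M[C]_n) (l : C).

Lemma Alv_inv_opnorm_ge0 A l v : (0 <= Alv_inv_opnorm A l v)%E.
Proof.
apply: le_ereal_sup_tmp; exists 0%:E => //; exists 0, 0.
by rewrite Alv0 vnorm0 mul0r; split; [exact: Tv0 | split; [exact: Tv0 | by []]].
Qed.

Lemma Alv_inv_opnorm_le A l v (m : R) : 0 <= m -> Alv_inv_bound A l v m ->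
  (Alv_inv_opnorm A l v <= m%:E)%E.
Proof.
move=> m_ge0 bound; apply: ge_ereal_sup => _ [u [w [_ [w_v [<- ->]]]]].
rewrite lee_fin; have [->|u0] := eqVneq (vnorm (Alv A l v w)) 0.
  by rewrite invr0 mulr0.
by rewrite ler_pdivrMr ?bound // lt_def u0 vnorm_ge0.
Qed.

Lemma Alv_inv_bound_opnorm A l v (r : R) : v != 0 -> Alv_invertible A l v ->
  Alv_inv_opnorm A l v = r%:E -> Alv_inv_bound A l v r.
Proof.
move=> v0 inv opnormE w w_v; set u := Alv A l v w.
have : ((vnorm w / vnorm u)%:E <= r%:E)%E.
  rewrite -opnormE; apply: ereal_sup_ubound; exists u, w.
  by do !split => //; exact: Tv_Alv.
rewrite lee_fin; have [u0|u_neq0] := eqVneq (vnorm u) 0; last first.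
  by rewrite -ler_pdivrMr // lt_def u_neq0 vnorm_ge0.
have [w0 [_ uniq]] := inv u (Tv_Alv A l w v0).
have -> : w = 0.
  rewrite -(uniq w) //; apply: uniq; split; first exact: Tv0.
  by rewrite Alv0 (vnorm_eq0 u0).
by rewrite vnorm0 u0 mulr0.
Qed.

Lemma mu_ge0 A l v : frob A = 1 -> (0 <= mu A l v)%E.
Proof.
rewrite /mu => ->; case: asboolP => _; last exact: le0y.
by rewrite mul1e Alv_inv_opnorm_ge0.
Qed.

Lemma mu_le_bound A l v (m : R) : frob A = 1 -> v != 0 -> 0 <= m ->
  Alv_inv_bound A l v m -> (mu A l v <= m%:E)%E.
Proof.
move=> frobA v0 m_ge0 bound; rewrite /mu frobA mul1e.
case: asboolP => [_|]; first exact: Alv_inv_opnorm_le.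
by move/(_ (Alv_invertible_of_bound v0 bound)).
Qed.

Lemma mu_fin_bound A l v (r : R) : frob A = 1 -> v != 0 ->
  mu A l v = r%:E -> 0 <= r /\ Alv_inv_bound A l v r.
Proof.
move=> frobA v0 muE; have := mu_ge0 l v frobA; rewrite muE lee_fin => r_ge0.
move: muE; rewrite /mu frobA mul1e; case: asboolP => // inv.
by split; last exact: Alv_inv_bound_opnorm.
Qed.

End ConditionNumber.

Section Perturbation.
Variables (R : realType) (n : nat).
Local Notation C := R[i].
Local Notation V := 'cV[C]_n.
Implicit Types (u v w x : V) (A : 'M[C]_n) (l : C).

Definition cos_angle v v' : R := cmod (cinner v v') / (vnorm v * vnorm v').

Lemma cos_angleC v v' : cos_angle v' v = cos_angle v v'.
Proof. by rewrite /cos_angle (cinnerC v) !cmodE cnorm2J (mulrC (vnorm v)). Qed.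

Lemma cos_angle_ge0 v v' : 0 <= cos_angle v v'.
Proof. by rewrite divr_ge0 ?cmod_ge0 ?mulr_ge0 ?vnorm_ge0. Qed.

Lemma cos_angle_le1 v v' : cos_angle v v' <= 1.
Proof.
rewrite /cos_angle; have [->|vv'0] := eqVneq (vnorm v * vnorm v') 0.
  by rewrite invr0 mulr0.
by rewrite ler_pdivrMr ?mul1r ?cauchy_schwarz // lt_def vv'0 mulr_ge0 ?vnorm_ge0.
Qed.

Lemma dP_cos_angle v v' : dP v v' = acos (cos_angle v v').
Proof. by []. Qed.

Lemma unit_rescaling v v' : v != 0 -> v' != 0 -> exists k k',
  [/\ k != 0, k' != 0, vnorm2 (k *: v) = 1, vnorm2 (k' *: v') = 1 &
   cinner (k' *: v') (k *: v) = (cos_angle v v')%:C].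
Proof.
move=> v0 v'0; set z := cinner v' v.
have z_cmod : cmod (cinner v v') = cmod z by rewrite /z cinnerC !cmodE cnorm2J.
(* a phase [p] of modulus one with [p * z = |z|] *)
pose p : C := if z == 0 then 1 else z^* / (cmod z)%:C.
have [p_unit pz] : cnorm2 p = 1 /\ p * z = (cmod z)%:C.
  rewrite /p; case: eqP => [->|/eqP z0].
    by rewrite mulr0 !cmodE /cnorm2 /= !expr0n expr1n !addr0 sqrtr0.
  have cz0 : cmod z != 0 by apply: contra z0 => /eqP/cmod_eq0->.
  split.
    by rewrite cnorm2M cnorm2J -real_complexV cnorm2R -cmod_sqr exprVn mulfV // sqrf_eq0.
  rewrite mulrAC (mulrC _ z) -cnorm2E -cmod_sqr expr2 real_complexM.
  by field; rewrite real_complex_eq0.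
have p0 : p != 0 by apply: contra_eq_neq p_unit => ->; rewrite cnorm2R expr0n eq_sym oner_neq0.
have [vn vn'] := (vnorm_gt0 v0, vnorm_gt0 v'0).
have inv_neq0 u : 0 < vnorm u -> ((vnorm u)^-1)%:C != 0 :> C.
  by move=> un; rewrite real_complex_eq0 invr_eq0 gt_eqF.
have unit_scale u : u != 0 -> vnorm2 (((vnorm u)^-1)%:C *: u) = 1.
  move=> u0; rewrite vnorm2Z cnorm2R -vnorm_sqr exprVn mulVf //.
  by rewrite sqrf_eq0 gt_eqF // vnorm_gt0.
exists ((vnorm v)^-1)%:C, (p * ((vnorm v')^-1)%:C); split.
- exact: inv_neq0.
- by rewrite mulf_neq0 ?inv_neq0.
- exact: unit_scale.
- by rewrite -scalerA vnorm2Z unit_scale // p_unit mul1r.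
rewrite cinnerZl cinnerZr conjC_real_complex -/z /cos_angle z_cmod.
transitivity (p * z * (((vnorm v')^-1)%:C * ((vnorm v)^-1)%:C)); first by ring.
by rewrite pz -!real_complexM; congr (_ %:C); field; rewrite !gt_eqF.
Qed.

Definition angle_gap v v' : R := 4 * Num.sqrt (1 - cos_angle v v').

Lemma angle_gapC v v' : angle_gap v' v = angle_gap v v'.
Proof. by rewrite /angle_gap cos_angleC. Qed.

Lemma angle_gap_ge0 v v' : 0 <= angle_gap v v'.
Proof. by rewrite mulr_ge0 ?sqrtr_ge0. Qed.

Lemma dP_ge0 v v' : 0 <= dP v v'.
Proof.
by rewrite dP_cos_angle acos_ge0 // cos_angle_le1 andbT (le_trans _ (cos_angle_ge0 _ _)).
Qed.

Lemma angle_gap_le_dP v v' : angle_gap v v' <= 36 / 10 * dP v v'.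
Proof. by rewrite sqrt_one_sub_le_acos // cos_angle_ge0 cos_angle_le1. Qed.

Lemma Alv_inv_bound_perturb A l v v' (m : R) : frob A <= 1 -> v != 0 -> v' != 0 ->
  0 <= m -> angle_gap v v' * m < 1 -> Alv_inv_bound A l v m ->
  Alv_inv_bound A l v' (m / (1 - angle_gap v v' * m)).
Proof.
move=> frobA v0 v'0 m_ge0 Km_lt1 bound.
have [k [k' [k0 k'0 a_unit b_unit cinner_ba]]] := unit_rescaling v0 v'0.
apply/(Alv_inv_bound_scale _ _ _ _ k'0).
apply: (Alv_inv_bound_transport a_unit b_unit cinner_ba) => //; first exact: cos_angle_ge0.
exact/(Alv_inv_bound_scale _ _ _ _ k0).
Qed.

Lemma mu_perturb_le A l v v' (r : R) : frob A = 1 -> v != 0 -> v' != 0 ->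
  mu A l v = r%:E -> angle_gap v v' * r < 1 ->
  (mu A l v' <= (r / (1 - angle_gap v v' * r))%:E)%E.
Proof.
move=> frobA v0 v'0 muE Kr_lt1; have [r_ge0 bound] := mu_fin_bound frobA v0 muE.
apply: mu_le_bound => //; last by apply: Alv_inv_bound_perturb; rewrite ?frobA.
by rewrite divr_ge0 // subr_ge0 ltW.
Qed.

Lemma mu_perturb_ge A l v v' (r r' : R) : frob A = 1 -> v != 0 -> v' != 0 ->
  mu A l v = r%:E -> mu A l v' = r'%:E -> r <= r' * (1 + angle_gap v v' * r).
Proof.
move=> frobA v0 v'0 muE mu'E; have K_ge0 := angle_gap_ge0 v v'.
have [[r_ge0 _] [r'_ge0 _]] := (mu_fin_bound frobA v0 muE, mu_fin_bound frobA v'0 mu'E).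
have [Kr'_lt1|Kr'_ge1] := ltP (angle_gap v v' * r') 1; last nra.
have := mu_perturb_le frobA v'0 v0 mu'E; rewrite angle_gapC muE lee_fin.
by move=> /(_ Kr'_lt1); rewrite ler_pdivlMr ?subr_gt0 //; nra.
Qed.

Lemma mu_perturb_fin A l v v' (r eps : R) : frob A = 1 -> v != 0 -> v' != 0 ->
  mu A l v = r%:E -> angle_gap v v' * r <= eps -> eps < 1 ->
  ((r / (1 + eps))%:E <= mu A l v' /\ mu A l v' <= (r / (1 - eps))%:E)%E.
Proof.
move=> frobA v0 v'0 muE Kr_le eps_lt1; have [r_ge0 _] := mu_fin_bound frobA v0 muE.
have Kr_ge0 : 0 <= angle_gap v v' * r by rewrite mulr_ge0 ?angle_gap_ge0.
split; last first.
  apply: le_trans (mu_perturb_le frobA v0 v'0 muE _) _; first lra.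
  by rewrite lee_fin ler_wpM2l // lef_pV2 ?posrE ?subr_gt0 //; lra.
case mu'E : (mu A l v') => [r'| |]; [|exact: leey|by have := mu_ge0 l v' frobA; rewrite mu'E].
have [r'_ge0 _] := mu_fin_bound frobA v'0 mu'E.
have : 1 + angle_gap v v' * r <= 1 + eps by rewrite lerD2l.
move=> /(ler_wpM2l r'_ge0); have := mu_perturb_ge frobA v0 v'0 muE mu'E.
by rewrite lee_fin ler_pdivrMr; lra.
Qed.

Lemma mu_perturb_infty A l v v' : frob A = 1 -> v != 0 -> v' != 0 ->
  mu A l v = +oo%E -> dP v v' = 0 -> mu A l v' = +oo%E.
Proof.
move=> frobA v0 v'0 muE d_eq0.
have K0 : angle_gap v v' = 0.
  by apply/le_anti; rewrite angle_gap_ge0 andbT -(mulr0 (36 / 10)) -d_eq0 angle_gap_le_dP.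
case mu'E : (mu A l v') => [r'| //|]; last by have := mu_ge0 l v' frobA; rewrite mu'E.
have := mu_perturb_le frobA v'0 v0 mu'E; rewrite angle_gapC K0 mul0r muE leye_eq.
by move=> /(_ ltr01).
Qed.

End Perturbation.

Unset Implicit Arguments. Set Strict Implicit.

Theorem lemma4p4 (R : realType) (n : nat) (A : 'M[R[i]]_n) (l : R[i])
    (v v' : 'cV[R[i]]_n) (eps : R) :
  frob A = 1 -> v != 0 -> v' != 0 -> A *m v = l *: v ->
  ((36 / 10 : R)%:E * mu A l v * (dP v v')%:E <= eps%:E)%E -> eps < 1 ->
  (mu A l v * ((1 + eps)^-1)%:E <= mu A l v' /\
   mu A l v' <= mu A l v * ((1 - eps)^-1)%:E)%E.
Proof.
move=> frobA v0 v'0 _ hyp eps_lt1.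
case muE : (mu A l v) => [r| |]; last by have := mu_ge0 l v frobA; rewrite muE.
- rewrite muE -!EFinM lee_fin in hyp; rewrite -!EFinM.
  have [r_ge0 _] := mu_fin_bound frobA v0 muE.
  apply: (mu_perturb_fin frobA v0 v'0 muE) => //.
  by have := ler_wpM2r r_ge0 (angle_gap_le_dP v v'); lra.
- have d_eq0 : dP v v' = 0.
    apply/le_anti; rewrite dP_ge0 andbT leNgt; apply/negP => d_gt0.
    by move: hyp; rewrite muE gt0_muley ?lte_fin // gt0_mulye ?lte_fin // leye_eq.
  have eps_ge0 : 0 <= eps by move: hyp; rewrite d_eq0 mule0 lee_fin.
  rewrite (mu_perturb_infty frobA v0 v'0 muE d_eq0) !gt0_mulye ?lte_fin ?invr_gt0 //; lra.
Qed.
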